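(* Let $m\ge3$ be an integer, $\beta=\frac{m+\sqrt{m^2-4}}{2}$, and let $\mathbf U=(U_k)$ be given by $U_{-1}=0$, $U_0=1$, $U_{k+1}=mU_k-U_{k-1}$ for $k\in\mathbb N$. Let $n\in\mathbb N$ have $\mathbf U$-expansion $(n)_{\mathbf U}=a_Na_{N-1}\cdots a_1a_0$. Then the $\mathbf U$-expansion of $\lfloor n/\beta\rfloor$ is $a_Na_{N-1}\cdots a_1$ (with leading zeros removed; empty word meaning $0$), and the $\beta$-expansion of the fractional part $\{n/\beta\}$ is $$d_\beta(\{n/\beta\})=a_0a_1\cdots a_{N-1}a_N0^\omega.$$
   Context: $\mathbf U$-expansion: for $n\ge1$, $(n)_{\mathbf U}=a_N\cdots a_0$ is the unique string of non-negative integers with $a_N\ne0$, $n=\sum_{k=0}^N a_kU_k$ and $\sum_{k=0}^i a_kU_k<U_{i+1}$ for all $i\le N$ (the greedy representation); equivalently, a string over $\{0,\dots,m-1\}$ with nonzero leading digit not containing any factor $(m-1)(m-2)^{j}(m-1)$, $j\ge0$. The expansion of $0$ is the empty word. $\beta$-expansion: for $x\in[0,1)$, with $T_\beta(x)=\beta x-\lfloor\beta x\rfloor$, $d_\beta(x)=(x_i)_{i\ge1}$ where $x_i=\lfloor\beta T_\beta^{i-1}(x)\rfloor$, so that $x=\sum_{i\ge1}x_i\beta^{-i}$. *)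

From mathcomp Require Import all_boot all_order all_algebra.
From mathcomp Require Import reals.
Set Implicit Arguments. Unset Strict Implicit. Unset Printing Implicit Defensive.
Import Order.TTheory GRing.Theory Num.Theory.

(* U-sequence: U_{-1} = 0, U_0 = 1, U_{k+1} = m U_k - U_{k-1}.
   Uaux m k = (U_{k-1}, U_k). For m >= 3 the sequence is increasing, so the
   truncated subtraction of nat never truncates. *)
Fixpoint Uaux (m k : nat) : nat * nat :=
  match k with
  | 0 => (0, 1)
  | k'.+1 => let p := Uaux m k' in (p.2, m * p.2 - p.1)
  end.
Definition U (m k : nat) : nat := (Uaux m k).2.

(* A digit word a_N ... a_0 is represented LITTLE-ENDIAN as the list
   [:: a_0; a_1; ...; a_N]. [is_Uexp m n s] : s is the (greedy)
   U-expansion of n: the last (leading) digit is nonzero (s = [::] for n = 0),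
   n = sum_k a_k U_k, and sum_{k<=i} a_k U_k < U_{i+1} for all i <= N. *)
Definition is_Uexp (m n : nat) (s : seq nat) : Prop :=
  [/\ last 1 s != 0,
      n = \sum_(k < size s) nth 0 s k * U m k
    & forall i, i < size s -> \sum_(k < i.+1) nth 0 s k * U m k < U m i.+1].

Local Open Scope ring_scope.

Definition beta {R : realType} (m : nat) : R :=
  (m%:R + Num.sqrt (m%:R ^+ 2 - 4)) / 2.

Definition Tb {R : realType} (b x : R) : R := b * x - (Num.floor (b * x))%:~R.

(* i-th digit (i >= 1) of the beta-expansion d_beta(x):
   x_i = floor(beta * T_beta^{i-1}(x)). *)
Definition beta_digit {R : realType} (b x : R) (i : nat) : int :=
  Num.floor (b * iter i.-1 (Tb b) x).

Definition fracpart {R : realType} (x : R) : R := x - (Num.floor x)%:~R.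

From mathcomp Require Import all_boot all_order all_algebra.
From mathcomp Require Import reals.
From mathcomp Require Import zify ring lra.
Import Order.TTheory GRing.Theory Num.Theory.
Set Implicit Arguments. Unset Strict Implicit.

(** Write [c = m - beta = 1/beta] for the conjugate of [beta]. Since
  [U_k c = U_(k-1) + c^(k+1)], dividing a U-expansion by [beta] gives
  [n / beta = sum_k a_(k+1) U_k + sum_k a_k c^(k+1)]. The greedy condition
  forbids the factors [(m-1)(m-2)^j(m-1)], and this is exactly what keeps the
  second sum in [[0, 1)]; it is thus the fractional part of [n / beta], and
  multiplying it by [beta] splits off its first digit, so its beta-expansion
  is [a_0 a_1 ... a_N 0^omega]. The integer part [sum_k a_(k+1) U_k] inherits
  the greedy condition from [n] because the ratios [U_(k+1) / U_k] decrease. *)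

(* [Upred m k] is [U_(k-1)], with [U_(-1) = 0]; [Upred m k.+1] is [U m k]
  by conversion. *)
Definition Upred (m k : nat) : nat := (Uaux m k).1.

Section URecurrence.
Variable m : nat.
Hypothesis m_ge3 : (3 <= m)%N.

Lemma Upred_le_U k : (Upred m k <= U m k)%N.
Proof. by elim: k => [//|k IH]; rewrite /Upred /U /= in IH *; nia. Qed.

Lemma U_recS k : (U m k.+1 + Upred m k = m * U m k)%N.
Proof. by have := Upred_le_U k; rewrite /Upred /U /=; nia. Qed.

Lemma U_gt0 k : (0 < U m k)%N.
Proof.
elim: k => [//|k IH]; have := U_recS k; have := Upred_le_U k; nia.
Qed.

Lemma U_rec k : (U m k.+2 + U m k = m * U m k.+1)%N.
Proof. exact: U_recS k.+1. Qed.

Lemma U_leS k : (U m k.+1 <= m * U m k)%N.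
Proof. by have := U_recS k; lia. Qed.

(* [U_(k+1) U_j - U_k U_(j+1)] is invariant under [(k, j) -> (k+1, j+1)]. *)
Lemma U_ratio_antitone k j : (k <= j)%N -> (U m k * U m j.+1 <= U m k.+1 * U m j)%N.
Proof.
elim: k j => [|k IH] j le_kj.
  have -> : U m 1 = m by rewrite /U /=; lia.
  have -> : U m 0 = 1 by [].
  by rewrite mul1n U_leS.
case: j le_kj => [//|j] le_kj.
by have := IH j le_kj; have := U_rec k; have := U_rec j; nia.
Qed.

Lemma greedy_behead l t :
  (\sum_(k < t.+2) nth 0 l k * U m k < U m t.+2)%N ->
  (\sum_(k < t.+1) nth 0 (behead l) k * U m k < U m t.+1)%N.
Proof.
move=> lt_N; rewrite -(ltn_pmul2r (U_gt0 t.+2)).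
apply: leq_ltn_trans (_ : _ <= (\sum_(k < t.+2) nth 0 l k * U m k) * U m t.+1)%N _.
  rewrite [in X in (_ <= X)%N]big_ord_recl mulnDl !big_distrl /=.
  apply: leq_trans (leq_addl _ _).
  apply: leq_sum => k _; rewrite nth_behead -!mulnA leq_mul2l.
  by apply/orP; right; apply: U_ratio_antitone; exact: ltnW.
by rewrite mulnC ltn_pmul2l ?U_gt0.
Qed.

Lemma is_Uexp_behead n s : is_Uexp m n s ->
  is_Uexp m (\sum_(k < size (behead s)) nth 0 (behead s) k * U m k) (behead s).
Proof.
case=> s_last _ greedy_s; split => // [|i lt_i].
  by move: s_last; case: s {greedy_s} => [|a [|a' l]].
by apply: greedy_behead; apply: greedy_s; rewrite size_behead in lt_i; lia.
Qed.

End URecurrence.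

(* Digit words are read from the least significant digit. [admissible m l]
  says that the digits are [< m] and that every digit [m-1] is followed by a
  word accepted by [admissible_after_top m], i.e. by [(m-2)^j] and then either
  the end of the word or a digit [<= m-3]. *)
Fixpoint admissible_after_top (m : nat) (l : seq nat) : bool :=
  if l is a :: l' then (a <= m - 3)%N || ((a == m - 2) && admissible_after_top m l')
  else true.

Fixpoint admissible (m : nat) (l : seq nat) : bool :=
  if l is a :: l' then
    [&& (a <= m - 1)%N, (a == m - 1) ==> admissible_after_top m l' & admissible m l']
  else true.

Lemma admissible_behead m l : admissible m l -> admissible m (behead l).
Proof. by case: l => [//|a l] /= /and3P[]. Qed.

Lemma admissible_drop m j l : admissible m l -> admissible m (drop j l).
Proof.
rewrite drop_behead; elim: j => [//|j IH] /IH.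
by rewrite iterS; exact: admissible_behead.
Qed.

Section GreedyAdmissible.
Variables (m : nat) (s : seq nat).
Hypothesis m_ge3 : (3 <= m)%N.

Let psum i := (\sum_(k < i.+1) nth 0 s k * U m k)%N.

Hypothesis greedy : forall i, (i < size s)%N -> (psum i < U m i.+1)%N.

Lemma psumS i : psum i.+1 = (psum i + nth 0 s i.+1 * U m i.+1)%N.
Proof. by rewrite /psum big_ord_recr. Qed.

Lemma digit_U_le_psum i : (nth 0 s i * U m i <= psum i)%N.
Proof. by case: i => [|i]; [rewrite /psum big_ord1 | rewrite psumS; lia]. Qed.

Lemma greedy_digit_lt i : (i < size s)%N -> (nth 0 s i < m)%N.
Proof.
move=> lt_i; rewrite -(ltn_pmul2r (U_gt0 m_ge3 i)).
by have := greedy lt_i; have := digit_U_le_psum i; have := U_leS m_ge3 i; lia.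
Qed.

Lemma psum_top_block i j : (j <= i)%N -> nth 0 s j = (m - 1)%N ->
  (forall k, (j < k <= i)%N -> nth 0 s k = (m - 2)%N) ->
  (U m i.+1 <= psum i + U m i)%N.
Proof.
elim: i => [|i IH] le_ji s_j s_block.
  have j0 : j = 0%N by lia.
  rewrite j0 in s_j; have := digit_U_le_psum 0; rewrite s_j.
  by have := U_leS m_ge3 0; nia.
have := U_rec m_ge3 i; rewrite psumS.
case: (ltnP j i.+1) => [lt_ji | le_ij].
  have := IH ltac:(lia) s_j (fun k hk => s_block k ltac:(lia)).
  by rewrite (s_block i.+1 ltac:(lia)); nia.
have j_Si : j = i.+1 by lia.
by rewrite -j_Si s_j; nia.
Qed.

Lemma greedy_drop_after_top l i j : drop i.+1 s = l -> (i < size s)%N ->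
  (j <= i)%N -> nth 0 s j = (m - 1)%N ->
  (forall k, (j < k <= i)%N -> nth 0 s k = (m - 2)%N) ->
  admissible_after_top m l.
Proof.
elim: l i => [//|a l IH] i s_drop lt_i le_ji s_j s_block /=.
have lt_Si : (i.+1 < size s)%N.
  by rewrite ltnNge; apply/negP => /drop_oversize; rewrite s_drop.
move: s_drop; rewrite (drop_nth 0 lt_Si) => -[s_Si s_drop].
case: (leqP a (m - 3)) => //= gt_a3.
have [a_m2 | a_nm2] /= := eqVneq a (m - 2)%N.
  apply: (IH i.+1) => //; first lia.
  move=> k hk; case: (ltnP k i.+1) => hk'; first by apply: s_block; lia.
  have -> : k = i.+1 by lia.
  by rewrite s_Si.
have a_m1 : a = (m - 1)%N by have := greedy_digit_lt lt_Si; lia.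
have := greedy lt_Si; have := psum_top_block le_ji s_j s_block.
by rewrite psumS s_Si a_m1; have := U_rec m_ge3 i; nia.
Qed.

Lemma greedy_drop_admissible l i : drop i s = l -> admissible m l.
Proof.
elim: l i => [//|a l IH] i s_drop /=.
have lt_i : (i < size s)%N.
  by rewrite ltnNge; apply/negP => /drop_oversize; rewrite s_drop.
move: s_drop; rewrite (drop_nth 0 lt_i) => -[s_i s_drop].
apply/and3P; split; last exact: (IH i.+1).
  by have := greedy_digit_lt lt_i; lia.
apply/implyP => /eqP a_m1.
by apply: (greedy_drop_after_top s_drop lt_i (leqnn i)) => [|k]; [rewrite s_i | lia].
Qed.

Lemma greedy_admissible : admissible m s.
Proof. exact: (greedy_drop_admissible (drop0 s)). Qed.

End GreedyAdmissible.

Local Open Scope ring_scope.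

Lemma floor_natrD_frac (R : realType) (a : nat) (v : R) :
  0 <= v < 1 -> Num.floor (a%:R + v) = a%:Z.
Proof.
by case/andP=> v_ge0 v_lt1; apply: floor_def; rewrite intrD -pmulrn; lra.
Qed.

Section BetaExpansion.
Variables (R : realType) (m : nat).
Hypothesis m_ge3 : (3 <= m)%N.

Let M : R := m%:R.
Let b : R := beta m.
Let c : R := M - b.

Lemma natr_m_ge3 : 3 <= M.
Proof. by rewrite /M ler_nat. Qed.

Lemma beta_root : b * b = M * b - 1 /\ M - 1 < b.
Proof.
have hM := natr_m_ge3; rewrite /b /beta -/M; set r := Num.sqrt _.
have r_ge0 : 0 <= r by apply: sqrtr_ge0.
have r2 : r * r = M ^+ 2 - 4 by rewrite -expr2 sqr_sqrtr // subr_ge0; nra.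
by split; nra.
Qed.

Lemma conj_mul_beta : c * b = 1.
Proof. by rewrite /c mulrBl beta_root.1; ring. Qed.

Lemma conj_gt0 : 0 < c.
Proof.
by have := beta_root.2; have := conj_mul_beta; have := natr_m_ge3; rewrite /c; nra.
Qed.

Lemma invr_beta : b^-1 = c.
Proof.
have b_neq0 : b != 0 by apply/eqP => b0; have := conj_mul_beta; rewrite b0 mulr0; lra.
by rewrite -[c]mulr1 -(mulfV b_neq0) mulrA conj_mul_beta mul1r.
Qed.

Lemma U_beta k : (U m k)%:R = b * (Upred m k)%:R + c ^+ k :> R.
Proof.
elim: k => [|k IH]; first by rewrite /U /Upred /= mulr0 add0r expr0.
have -> : (U m k.+1)%:R = M * (U m k)%:R - (Upred m k)%:R :> R.
  by rewrite /M -natrM -(U_recS m_ge3 k) natrD addrK.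
rewrite [Upred m k.+1]/Upred /= -/(U m k) IH exprS.
set x := (Upred m k)%:R; set y := c ^+ k.
have -> : b * (b * x + y) = (b * b) * x + b * y by ring.
by rewrite beta_root.1 /c; ring.
Qed.

Lemma U_mul_conj k : (U m k)%:R * c = (Upred m k)%:R + c ^+ k.+1 :> R.
Proof.
by rewrite U_beta exprSr mulrDl mulrC mulrA conj_mul_beta mul1r.
Qed.

Lemma beta_gt0 : 0 < b.
Proof. by have := beta_root.2; have := natr_m_ge3; lra. Qed.

Lemma natrD_le_m (a k : nat) : (a + k <= m)%N -> a%:R + k%:R <= M.
Proof. by rewrite -natrD /M ler_nat. Qed.

(* [sum_k l_k c^(k+1)], by Horner's rule. *)
Definition beta_val (l : seq nat) : R := foldr (fun a t => (a%:R + t) * c) 0 l.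

Lemma beta_val_ge0 l : 0 <= beta_val l.
Proof.
elim: l => [//|a l IH] /=.
by apply: mulr_ge0; [exact: addr_ge0 | exact: ltW conj_gt0].
Qed.

Lemma beta_mul_val_cons a l : b * beta_val (a :: l) = a%:R + beta_val l.
Proof. by rewrite /= mulrC -mulrA conj_mul_beta mulr1. Qed.

(* A leading digit [m-1] forces the tail below [beta - (m-1)], since
  [(beta - (m-1)) beta = beta - 1]. *)
Lemma beta_val_lt l : admissible m l ->
  beta_val l < 1 /\ (admissible_after_top m l -> beta_val l < b - (M - 1)).
Proof.
have b_gt := beta_root.2; have hM := natr_m_ge3.
have top_bound : (b - (M - 1)) * b = b - 1 by rewrite mulrBl beta_root.1; ring.
elim: l => [|a l IH] /=; first by split => //; lra.
case/and3P => a_le a_top adm_l; have [IH1 IH2] := IH adm_l.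
have := beta_val_ge0 l; rewrite -invr_beta !ltr_pdivrMr ?beta_gt0 // mul1r top_bound.
split.
  have [a_m1 | a_nm1] := eqVneq a (m - 1)%N.
    have := IH2 (implyP a_top (introT eqP a_m1)).
    by have := natrD_le_m (a := a) (k := 1) ltac:(lia); lra.
  by have := natrD_le_m (a := a) (k := 2) ltac:(lia); lra.
case/orP => [a_le3 | /andP[/eqP a_m2 adm_top_l]].
  by have := natrD_le_m (a := a) (k := 3) ltac:(lia); lra.
have : M <= a%:R + 2%:R by rewrite -natrD /M ler_nat; lia.
by have := IH2 adm_top_l; have := natrD_le_m (a := a) (k := 2) ltac:(lia); lra.
Qed.

Lemma beta_val_lt1 l : admissible m l -> 0 <= beta_val l < 1.
Proof. by move=> adm_l; rewrite beta_val_ge0 (beta_val_lt adm_l).1. Qed.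

Lemma beta_val_sum l : beta_val l = \sum_(k < size l) (nth 0%N l k)%:R * c ^+ k.+1.
Proof.
elim: l => [|a l IH]; first by rewrite /= big_ord0.
rewrite /= big_ord_recl /= IH expr1 mulrDl mulr_suml; congr (_ + _).
by apply: eq_bigr => k _; rewrite [in RHS]exprSr mulrA.
Qed.

Lemma digits_sum_mul_conj (l : seq nat) t :
  (\sum_(k < t.+1) nth 0 l k * U m k)%N%:R * c =
  (\sum_(k < t) nth 0 (behead l) k * U m k)%N%:R
  + \sum_(k < t.+1) (nth 0%N l k)%:R * c ^+ k.+1.
Proof.
rewrite natr_sum mulr_suml.
under eq_bigr => k _ do rewrite natrM -mulrA U_mul_conj mulrDr.
rewrite big_split /= big_ord_recl /= mulr0 add0r natr_sum.
by congr (_ + _); apply: eq_bigr => k _; rewrite natrM nth_behead.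
Qed.

Lemma Uexp_div_beta n s : is_Uexp m n s ->
  n%:R / b =
  (\sum_(k < size (behead s)) nth 0 (behead s) k * U m k)%N%:R + beta_val s.
Proof.
case=> _ -> _; rewrite invr_beta beta_val_sum.
case: s => [|a l]; first by rewrite /= !big_ord0 mul0r add0r.
exact: digits_sum_mul_conj.
Qed.

Lemma Tb_beta_val l : admissible m l -> Tb b (beta_val l) = beta_val (behead l).
Proof.
case: l => [|a l] adm_l; first by rewrite /Tb /= mulr0 floor0 subr0.
rewrite /Tb beta_mul_val_cons floor_natrD_frac; last first.
  exact: beta_val_lt1 (admissible_behead adm_l).
by rewrite -pmulrn addrAC subrr add0r.
Qed.

Lemma iter_Tb_beta_val j l : admissible m l ->
  iter j (Tb b) (beta_val l) = beta_val (drop j l).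
Proof.
move=> adm_l; rewrite drop_behead; elim: j => [//|j IH].
by rewrite iterS IH Tb_beta_val // -drop_behead admissible_drop.
Qed.

Lemma beta_digit_beta_val l i : admissible m l ->
  beta_digit b (beta_val l) i = (nth 0 l i.-1)%:Z.
Proof.
move=> adm_l; rewrite /beta_digit iter_Tb_beta_val //.
have -> : nth 0 l i.-1 = nth 0 (drop i.-1 l) 0 by rewrite nth_drop addn0.
have := admissible_drop i.-1 adm_l.
case: (drop i.-1 l) => [|a l'] adm_drop; first by rewrite /beta_val /= mulr0 floor0.
rewrite beta_mul_val_cons floor_natrD_frac //.
exact: beta_val_lt1 (admissible_behead adm_drop).
Qed.

End BetaExpansion.

Theorem proposition3 (R : realType) (m n : nat) (s : seq nat) :
  (3 <= m)%N ->
  is_Uexp m n s ->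
  (exists q : nat,
      Num.floor (n%:R / beta m : R) = q%:Z /\ is_Uexp m q (behead s)) /\
  (forall i : nat, (1 <= i)%N ->
      beta_digit (beta m : R) (fracpart (n%:R / beta m)) i = (nth 0%N s i.-1)%:Z).
Proof.
move=> m_ge3 s_Uexp; have [_ _ greedy] := s_Uexp.
have adm_s := greedy_admissible m_ge3 greedy.
have n_div := Uexp_div_beta R m_ge3 s_Uexp.
set q := (\sum_(k < size (behead s)) _)%N in n_div.
have floor_q : Num.floor (n%:R / beta m : R) = q%:Z.
  by rewrite n_div floor_natrD_frac // beta_val_lt1.
split.
  by exists q; split; last exact: (is_Uexp_behead m_ge3 s_Uexp).
move=> i _; rewrite /fracpart floor_q n_div -pmulrn addrAC subrr add0r.
exact: beta_digit_beta_val.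
Qed.
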